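(* Let $v\ge1$, $n\ge1$, $\epsilon>0$, and let $(\mathcal{X},\mathcal{Y},\mathcal{I})$ be a $(v,b,r,\lambda)$-RPBD with $\mathcal{X}=\{1,\dots,v\}$. Let $Q(y|x)=\alpha e^\epsilon$ if $(x,y)\in\mathcal{I}$ and $Q(y|x)=\alpha$ otherwise, with $\alpha=\frac{1}{re^\epsilon+b-r}$. With $X_1,\dots,X_n$ i.i.d. $\sim P\in\Delta_v$ and $Y_i\sim Q(\cdot|X_i)$, the estimator $$\hat P_{n,x}(Y_1,\dots,Y_n)=\frac{1}{(r-\lambda)(e^\epsilon-1)}\left(\frac{N_x(Y_1,\dots,Y_n)}{n\alpha}-(\lambda e^\epsilon+(r-\lambda))\right),\quad N_x=\sum_{i=1}^n\mathbb{1}(Y_i\in\mathcal{I}_x),$$ is unbiased. Its risk under the squared loss is $$R_{v,n}(\ell_2^2,P,Q,\hat P_n)=\frac1n\left[\frac{re^\epsilon+(v-1)(\lambda e^\epsilon+r-\lambda)}{(r-\lambda)^2(e^\epsilon-1)^2v}\left[v(b-r)+(v-1)(r-\lambda)(e^\epsilon-1)\right]+\frac1v-\sum_{x\in\mathcal{X}}P_x^2\right],$$ and its worst-case risk is $$\sup_{P\in\Delta_v}R_{v,n}(\ell_2^2,P,Q,\hat P_n)=\frac{re^\epsilon+(v-1)(\lambda e^\epsilon+r-\lambda)}{(r-\lambda)^2(e^\epsilon-1)^2nv}\left[v(b-r)+(v-1)(r-\lambda)(e^\epsilon-1)\right],$$ attained when $P$ is the uniform distribution.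
   Context: $\Delta_v$ is the set of probability vectors on $\{1,\dots,v\}$. For an incidence structure $(\mathcal{X},\mathcal{Y},\mathcal{I})$, $\mathcal{I}\subset\mathcal{X}\times\mathcal{Y}$, let $\mathcal{I}_x=\{y:(x,y)\in\mathcal{I}\}$. For integers $v>0$, $b>r>\lambda\ge0$, a $(v,b,r,\lambda)$-RPBD (regular and pairwise-balanced design) is an incidence structure with $\mathcal{X},\mathcal{Y}$ nonempty finite, $|\mathcal{X}|=v$, $|\mathcal{Y}|=b$, $|\mathcal{I}_x|=r$ for all $x$, and $|\mathcal{I}_x\cap\mathcal{I}_{x'}|=\lambda$ for all $x\neq x'$. Risk: $R_{v,n}(\ell,P,Q,\hat P_n)=\mathbb{E}[\ell(P,\hat P_n(Y_1,\dots,Y_n))]$; $\ell_2^2(p,\hat p)=\sum_x(p_x-\hat p_x)^2$. *)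

From HB Require Import structures.
From mathcomp Require Import all_boot all_order all_algebra.
From mathcomp Require Import reals.
From mathcomp Require Import sequences exp.
Set Implicit Arguments. Unset Strict Implicit. Unset Printing Implicit Defensive.
Import Order.TTheory GRing.Theory Num.Theory.
Local Open Scope ring_scope.

Definition in_simplex (R : realType) (v : nat) (P : {ffun 'I_v -> R}) : Prop :=
  (forall x, 0 <= P x) /\ \sum_x P x = 1.

Definition is_RPBD (v b r lam : nat) (I : 'I_v -> 'I_b -> bool) : Prop :=
  [/\ (0 < v)%N, (r < b)%N, (lam < r)%N,
      (forall x, #|[set y | I x y]| = r) &
      (forall x x', x != x' -> #|[set y | I x y && I x' y]| = lam)].

Definition alphaQ (R : realType) (b r : nat) (eps : R) : R :=
  (r%:R * expR eps + (b%:R - r%:R))^-1.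

Definition Qch (R : realType) (v b r : nat) (eps : R) (I : 'I_v -> 'I_b -> bool)
  (x : 'I_v) (y : 'I_b) : R :=
  if I x y then alphaQ b r eps * expR eps else alphaQ b r eps.

Definition Ncount (v b n : nat) (I : 'I_v -> 'I_b -> bool)
  (ys : {ffun 'I_n -> 'I_b}) (x : 'I_v) : nat :=
  #|[set i : 'I_n | I x (ys i)]|.

Definition Phat (R : realType) (v b r lam n : nat) (eps : R)
  (I : 'I_v -> 'I_b -> bool) (ys : {ffun 'I_n -> 'I_b}) : {ffun 'I_v -> R} :=
  [ffun x => ((r%:R - lam%:R) * (expR eps - 1))^-1 *
     ((Ncount I ys x)%:R / (n%:R * alphaQ b r eps)
      - (lam%:R * expR eps + (r%:R - lam%:R)))].

Definition Exp (R : realType) (v b n : nat) (P : {ffun 'I_v -> R})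
  (Q : 'I_v -> 'I_b -> R) (F : {ffun 'I_n -> 'I_v} -> {ffun 'I_n -> 'I_b} -> R) : R :=
  \sum_(xs : {ffun 'I_n -> 'I_v}) \sum_(ys : {ffun 'I_n -> 'I_b})
     (\prod_(i : 'I_n) (P (xs i) * Q (xs i) (ys i))) * F xs ys.

Definition l22 (R : realType) (v : nat) (p q : {ffun 'I_v -> R}) : R :=
  \sum_x (p x - q x) ^+ 2.

Definition risk (R : realType) (v b n : nat)
  (loss : {ffun 'I_v -> R} -> {ffun 'I_v -> R} -> R)
  (P : {ffun 'I_v -> R}) (Q : 'I_v -> 'I_b -> R)
  (est : {ffun 'I_n -> 'I_b} -> {ffun 'I_v -> R}) : R :=
  Exp P Q (fun _ ys => loss P (est ys)).

Definition uniformP (R : realType) (v : nat) : {ffun 'I_v -> R} :=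
  [ffun _ => v%:R^-1].

Definition worst_risk (R : realType) (v b r lam n : nat) (eps : R) : R :=
  (r%:R * expR eps + (v%:R - 1) * (lam%:R * expR eps + r%:R - lam%:R)) /
  ((r%:R - lam%:R) ^+ 2 * (expR eps - 1) ^+ 2 * n%:R * v%:R) *
  (v%:R * (b%:R - r%:R) + (v%:R - 1) * (r%:R - lam%:R) * (expR eps - 1)).

(* Averaging out the private inputs, the outputs Y_1, ..., Y_n are i.i.d.
   with law q(y) = sum_x P_x Q(y|x).  Since every point lies in r blocks and
   two distinct points share lam blocks, each count N_x is binomial with
   success probability p_x = alpha (d + c P_x), where d = lam e^eps + r - lam
   and c = (r - lam)(e^eps - 1).  The estimator, affine in N_x, is therefore
   unbiased, and its mean squared error is its variance, a quadratic in P_x.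
   Summed over x, the risk depends on P only through -sum_x P_x^2, which by
   Cauchy-Schwarz is at most -1/v, with equality at the uniform law. *)

From HB Require Import structures.
From mathcomp Require Import all_boot all_order all_algebra.
From mathcomp Require Import reals sequences exp.
From mathcomp Require Import ring.

Set Implicit Arguments.
Unset Strict Implicit.
Unset Printing Implicit Defensive.
Import Order.TTheory GRing.Theory Num.Theory.
Local Open Scope ring_scope.

Lemma natr_card_set (R : pzSemiRingType) (T : finType) (p : pred T) :
  #|[set x | p x]|%:R = \sum_x (p x)%:R :> R.
Proof.
rewrite -sum1dep_card natr_sum big_mkcond /=.
by apply: eq_bigr => x _; case: (p x).
Qed.

Lemma sum_mul_if_eq (R : comPzRingType) (T : finType) (P : T -> R) (x : T) (a b : R) :
  \sum_x' P x' * (if x' == x then a else b) = b * \sum_x' P x' + (a - b) * P x.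
Proof.
rewrite (bigD1 x) //= eqxx [in RHS](bigD1 x) //=.
rewrite (eq_bigr (fun x' => b * P x')) => [|x' /negPf ->]; last by rewrite mulrC.
rewrite -mulr_sumr; ring.
Qed.

Lemma inv_card_le_sum_sqr (R : realFieldType) (T : finType) (P : T -> R) :
  (0 < #|T|)%N -> \sum_x P x = 1 -> #|T|%:R^-1 <= \sum_x P x ^+ 2.
Proof.
move=> T_gt0 P1; set m : R := #|T|%:R.
have m_neq0 : m != 0 by rewrite pnatr_eq0 -lt0n.
have : 0 <= \sum_x (P x - m^-1) ^+ 2 by apply: sumr_ge0 => x _; apply: sqr_ge0.
rewrite (eq_bigr (fun x => P x ^+ 2 + (- 2 * m^-1) * P x + m^-1 ^+ 2)); last first.
  by move=> x _; ring.
rewrite !big_split /= -mulr_sumr P1 sumr_const -mulr_natr -/m.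
by rewrite (_ : _ + _ = \sum_x P x ^+ 2 - m^-1) ?subr_ge0 //; field.
Qed.

Section IidMean.
Variables (R : comPzRingType) (J : finType) (n : nat) (q : J -> R).

Definition iid_mean (F : {ffun 'I_n -> J} -> R) : R :=
  \sum_(ys : {ffun 'I_n -> J}) (\prod_i q (ys i)) * F ys.

Lemma eq_iid_mean F G : (forall ys, F ys = G ys) -> iid_mean F = iid_mean G.
Proof. by move=> FG; apply: eq_bigr => ys _; rewrite FG. Qed.

Lemma iid_meanD F G : iid_mean (fun ys => F ys + G ys) = iid_mean F + iid_mean G.
Proof. by rewrite -big_split; apply: eq_bigr => ys _; rewrite mulrDr. Qed.

Lemma iid_meanZ a F : iid_mean (fun ys => a * F ys) = a * iid_mean F.
Proof. by rewrite mulr_sumr; apply: eq_bigr => ys _; rewrite mulrCA. Qed.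

Lemma iid_mean_sum (I : finType) (F : I -> {ffun 'I_n -> J} -> R) :
  iid_mean (fun ys => \sum_i F i ys) = \sum_i iid_mean (F i).
Proof.
by rewrite /iid_mean exchange_big; apply: eq_bigr => ys _; rewrite mulr_sumr.
Qed.

Lemma iid_mean_prod (g : 'I_n -> J -> R) :
  iid_mean (fun ys => \prod_i g i (ys i)) = \prod_i \sum_y q y * g i y.
Proof. by rewrite bigA_distr_bigA; apply: eq_bigr => ys _; rewrite big_split. Qed.

Hypothesis q_sum1 : \sum_y q y = 1.

Lemma iid_mean_prod_set (S : {set 'I_n}) (f : J -> R) :
  iid_mean (fun ys => \prod_(i in S) f (ys i)) = (\sum_y q y * f y) ^+ #|S|.
Proof.
transitivity (iid_mean (fun ys => \prod_i (if i \in S then f (ys i) else 1))).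
  by apply: eq_iid_mean => ys; rewrite big_mkcond.
rewrite (iid_mean_prod (fun i y => if i \in S then f y else 1)) -prodr_const.
rewrite [RHS]big_mkcond; apply: eq_bigr => i _; case: (i \in S) => //.
by under eq_bigr do rewrite mulr1.
Qed.

Lemma iid_mean_cst a : iid_mean (fun _ => a) = a.
Proof.
have mean1 : iid_mean (fun _ => 1) = 1.
  transitivity ((\sum_y q y * 1) ^+ #|@set0 'I_n|); last by rewrite cards0 expr0.
  by rewrite -iid_mean_prod_set; apply: eq_iid_mean => ys; rewrite big_set0.
rewrite -[RHS]mulr1 -[in RHS]mean1 -iid_meanZ.
by apply: eq_iid_mean => ys; rewrite mulr1.
Qed.

Variable A : pred J.
Local Notation p := (\sum_y q y * (A y)%:R).
Local Notation N ys := (#|[set i | A (ys i)]|%:R).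

Lemma iid_mean_indicator i : iid_mean (fun ys => (A (ys i))%:R) = p.
Proof.
rewrite -[RHS]expr1 -(cards1 i) -iid_mean_prod_set.
by apply: eq_iid_mean => ys; rewrite big_set1.
Qed.

Lemma iid_mean_count : iid_mean (fun ys => N ys) = n%:R * p.
Proof.
under eq_iid_mean do rewrite natr_card_set.
rewrite iid_mean_sum; under eq_bigr do rewrite iid_mean_indicator.
by rewrite sumr_const card_ord mulr_natl.
Qed.

Lemma iid_mean_count_sqr :
  iid_mean (fun ys => N ys ^+ 2) = n%:R * p * (1 - p) + (n%:R * p) ^+ 2.
Proof.
have pair_prod (ys : {ffun 'I_n -> J}) (i k : 'I_n) :
    (A (ys i))%:R * (A (ys k))%:R = \prod_(j in [set i; k]) (A (ys j))%:R :> R.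
  have [<-|ik] := eqVneq i k; last by rewrite big_setU1 ?inE // big_set1.
  by rewrite setUid big_set1; case: (A (ys i)); rewrite ?mulr1 ?mulr0.
under eq_iid_mean do rewrite natr_card_set expr2 big_distrlr /=.
under eq_iid_mean do under eq_bigr do under eq_bigr do rewrite pair_prod.
rewrite iid_mean_sum; under eq_bigr do rewrite iid_mean_sum.
under eq_bigr do under eq_bigr do rewrite (iid_mean_prod_set _ (fun y => (A y)%:R)) cards2.
have row_sum (i : 'I_n) : \sum_k p ^+ (i != k).+1 = n%:R * p ^+ 2 + (p - p ^+ 2).
  rewrite (eq_bigr (fun k => p ^+ 2 + (k == i)%:R * (p - p ^+ 2))); last first.
    by move=> k _; rewrite eq_sym; case: eqP => _ /=; ring.
  rewrite big_split /= sumr_const card_ord (bigD1 i) //= eqxx.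
  rewrite [\sum_(k | k != i) _]big1; last by move=> k /negPf ->; rewrite mul0r.
  by rewrite /= addr0 mulr1n -mulr_natl; ring.
under eq_bigr do rewrite row_sum.
by rewrite sumr_const card_ord -mulr_natl; ring.
Qed.

Lemma iid_mean_affine_count a0 a1 :
  iid_mean (fun ys => a0 + a1 * N ys) = a0 + a1 * (n%:R * p).
Proof. by rewrite iid_meanD iid_meanZ iid_mean_cst iid_mean_count. Qed.

Lemma iid_mean_sqr_dev_affine_count t a0 a1 :
  iid_mean (fun ys => (t - (a0 + a1 * N ys)) ^+ 2) =
  (t - (a0 + a1 * (n%:R * p))) ^+ 2 + a1 ^+ 2 * (n%:R * p * (1 - p)).
Proof.
transitivity (iid_mean (fun ys =>
    (t - a0) ^+ 2 + ((- 2 * (t - a0) * a1) * N ys + a1 ^+ 2 * N ys ^+ 2))).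
  by apply: eq_iid_mean => ys; ring.
rewrite !iid_meanD !iid_meanZ iid_mean_cst iid_mean_count iid_mean_count_sqr.
ring.
Qed.

End IidMean.

Definition channel_out (R : pzSemiRingType) (X Y : finType)
    (P : X -> R) (Q : X -> Y -> R) (y : Y) : R :=
  \sum_x P x * Q x y.

Lemma channel_out_sum1 (R : pzSemiRingType) (X Y : finType) (P : X -> R) (Q : X -> Y -> R) :
  (forall x, \sum_y Q x y = 1) -> \sum_x P x = 1 -> \sum_y channel_out P Q y = 1.
Proof.
move=> Q1 P1; rewrite exchange_big -[RHS]P1; apply: eq_bigr => x _.
by rewrite -mulr_sumr Q1 mulr1.
Qed.

Lemma sum_channel_out_mul (R : pzSemiRingType) (X Y : finType)
    (P : X -> R) (Q : X -> Y -> R) (f : Y -> R) :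
  \sum_y channel_out P Q y * f y = \sum_x P x * \sum_y Q x y * f y.
Proof.
under eq_bigr do rewrite mulr_suml.
rewrite exchange_big; apply: eq_bigr => x _.
by rewrite mulr_sumr; apply: eq_bigr => y _; rewrite mulrA.
Qed.

Lemma Exp_iid_mean (R : realType) (v b n : nat) (P : {ffun 'I_v -> R})
    (Q : 'I_v -> 'I_b -> R) (G : {ffun 'I_n -> 'I_b} -> R) :
  Exp P Q (fun _ ys => G ys) = iid_mean (channel_out P Q) G.
Proof.
rewrite /Exp exchange_big; apply: eq_bigr => ys _.
by rewrite -mulr_suml /channel_out bigA_distr_bigA.
Qed.

Lemma uniformP_in_simplex (R : realType) (v : nat) :
  (0 < v)%N -> in_simplex (uniformP R v).
Proof.
move=> v_gt0; split=> [x|]; first by rewrite ffunE invr_ge0 ler0n.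
under eq_bigr do rewrite ffunE.
by rewrite sumr_const card_ord -[_ *+ v]mulr_natr mulVf // pnatr_eq0 -lt0n.
Qed.

Lemma sum_sqr_uniformP (R : realType) (v : nat) :
  (0 < v)%N -> \sum_x uniformP R v x ^+ 2 = v%:R^-1.
Proof.
move=> v_gt0; under eq_bigr do rewrite ffunE.
by rewrite sumr_const card_ord -mulr_natr; field; rewrite pnatr_eq0 -lt0n.
Qed.

Section RPBDEstimator.
Variables (R : realType) (v b r lam n : nat) (eps : R) (I : 'I_v -> 'I_b -> bool).
Hypotheses (design : @is_RPBD v b r lam I) (n_gt0 : (0 < n)%N) (eps_gt0 : 0 < eps).

Local Notation e := (expR eps).
Local Notation alpha := (alphaQ b r eps).
Local Notation D := (r%:R * e + (b%:R - r%:R)).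
Local Notation c := ((r%:R - lam%:R) * (e - 1)).
Local Notation d := (lam%:R * e + (r%:R - lam%:R)).
Local Notation Q := (Qch r eps I).
Local Notation est := (@Phat R v b r lam n eps I).
Local Notation K := ((r%:R * e + (v%:R - 1) * (lam%:R * e + r%:R - lam%:R)) /
    ((r%:R - lam%:R) ^+ 2 * (e - 1) ^+ 2 * v%:R) *
    (v%:R * (b%:R - r%:R) + (v%:R - 1) * (r%:R - lam%:R) * (e - 1))).

Let e1_neq0 : e - 1 != 0.
Proof. by rewrite subr_eq0 gt_eqF // expR_gt1. Qed.

Let r_lam_neq0 : r%:R - lam%:R != 0 :> R.
Proof. by rewrite subr_eq0 eqr_nat gtn_eqF //; case: design. Qed.

Let n_neq0 : n%:R != 0 :> R.
Proof. by rewrite pnatr_eq0 -lt0n. Qed.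

Let v_neq0 : v%:R != 0 :> R.
Proof. by rewrite pnatr_eq0 -lt0n; case: design. Qed.

Let D_neq0 : D != 0.
Proof.
case: design => _ r_lt_b _ _ _.
by rewrite gt_eqF // ltr_wpDl ?mulr_ge0 ?expR_ge0 // subr_gt0 ltr_nat.
Qed.

Let alpha_neq0 : alpha != 0.
Proof. by rewrite invr_eq0. Qed.

Let neq0 := (e1_neq0, r_lam_neq0, n_neq0, v_neq0, D_neq0, alpha_neq0).

Lemma sum_block x : \sum_y (I x y)%:R = r%:R :> R.
Proof. by case: design => _ _ _ card_r _; rewrite -(card_r x) natr_card_set. Qed.

Lemma sum_block_pair x x' :
  \sum_y (I x y)%:R * (I x' y)%:R = (if x' == x then r%:R else lam%:R) :> R.
Proof.
have [<-|x'x] := eqVneq x' x.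
  rewrite -(sum_block x'); apply: eq_bigr => y _.
  by case: (I x' y); rewrite ?mulr1 ?mulr0.
case: design => _ _ _ _ card_lam.
rewrite -(card_lam x x') 1?eq_sym // natr_card_set.
by apply: eq_bigr => y _; rewrite -natrM mulnb.
Qed.

Lemma Qch_indicator x y : Q x y = alpha + alpha * (e - 1) * (I x y)%:R.
Proof. by rewrite /Qch; case: (I x y) => /=; ring. Qed.

Lemma Qch_sum1 x : \sum_y Q x y = 1.
Proof.
under eq_bigr do rewrite Qch_indicator.
rewrite big_split /= sumr_const card_ord -mulr_sumr sum_block -mulr_natr /alphaQ.
by field.
Qed.

Lemma Qch_block_mass x x' :
  \sum_y Q x' y * (I x y)%:R =
  if x' == x then alpha * e * r%:R else alpha * (r%:R + (e - 1) * lam%:R).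
Proof.
under eq_bigr do rewrite Qch_indicator mulrDl -mulrA [(I x' _)%:R * _]mulrC.
rewrite big_split /= -!mulr_sumr sum_block sum_block_pair.
by case: eqP => _; ring.
Qed.

Lemma channel_out_block_mass (P : {ffun 'I_v -> R}) x : \sum_x P x = 1 ->
  \sum_y channel_out P Q y * (I x y)%:R = alpha * (d + c * P x).
Proof.
move=> P1; rewrite sum_channel_out_mul.
under eq_bigr do rewrite Qch_block_mass.
by rewrite sum_mul_if_eq P1; ring.
Qed.

Lemma PhatE ys x :
  est ys x = - (d / c) + (c * (n%:R * alpha))^-1 * #|[set i | I x (ys i)]|%:R.
Proof. by rewrite ffunE /Ncount; field; rewrite ?neq0. Qed.

Lemma Phat_unbiased (P : {ffun 'I_v -> R}) x :
  in_simplex P -> Exp P Q (fun _ ys => est ys x) = P x.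
Proof.
move=> [_ P1]; rewrite Exp_iid_mean.
under eq_iid_mean do rewrite PhatE.
rewrite iid_mean_affine_count ?channel_out_block_mass //; last first.
  exact: channel_out_sum1 Qch_sum1 P1.
by field; rewrite ?neq0.
Qed.

Lemma Phat_sqr_err (P : {ffun 'I_v -> R}) x :
  in_simplex P -> Exp P Q (fun _ ys => (P x - est ys x) ^+ 2) =
  (d + c * P x) * (D - (d + c * P x)) / (n%:R * c ^+ 2).
Proof.
move=> [_ P1]; rewrite Exp_iid_mean.
under eq_iid_mean do rewrite PhatE.
rewrite iid_mean_sqr_dev_affine_count ?channel_out_block_mass //; last first.
  exact: channel_out_sum1 Qch_sum1 P1.
by rewrite /alphaQ; field; rewrite ?neq0.
Qed.

Lemma risk_Phat (P : {ffun 'I_v -> R}) :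
  in_simplex P -> risk (@l22 R v) P Q est = n%:R^-1 * (K + v%:R^-1 - \sum_x P x ^+ 2).
Proof.
move=> P_simplex; have [_ P1] := P_simplex.
transitivity (\sum_x Exp P Q (fun _ ys => (P x - est ys x) ^+ 2)).
  under [RHS]eq_bigr do rewrite Exp_iid_mean.
  by rewrite /risk /l22 Exp_iid_mean iid_mean_sum.
under eq_bigr do rewrite Phat_sqr_err //.
have quadratic t : (d + c * t) * (D - (d + c * t)) / (n%:R * c ^+ 2) =
    d * (D - d) / (n%:R * c ^+ 2) + (D - 2 * d) / (n%:R * c) * t - n%:R^-1 * t ^+ 2.
  by field; rewrite ?neq0.
under eq_bigr do rewrite quadratic.
rewrite sumrB big_split /= sumr_const card_ord -!mulr_sumr P1 -[_ *+ v]mulr_natr.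
by rewrite /alphaQ; field; rewrite ?neq0.
Qed.

Lemma worst_riskE : worst_risk v b r lam n eps = n%:R^-1 * K.
Proof. by rewrite /worst_risk; field; rewrite ?neq0. Qed.

End RPBDEstimator.

Theorem theorem6 (R : realType) (v b r lam n : nat) (eps : R)
  (I : 'I_v -> 'I_b -> bool) :
  (1 <= v)%N -> (1 <= n)%N -> 0 < eps -> @is_RPBD v b r lam I ->
  let Q := @Qch R v b r eps I in
  let est := @Phat R v b r lam n eps I in
  (* unbiasedness *)
  (forall P : {ffun 'I_v -> R}, @in_simplex R v P ->
     forall x : 'I_v, @Exp R v b n P Q (fun _ ys => est ys x) = P x) /\
  (* exact risk under squared loss *)
  (forall P : {ffun 'I_v -> R}, @in_simplex R v P ->
     @risk R v b n (@l22 R v) P Q est =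
     n%:R^-1 *
       ((r%:R * expR eps + (v%:R - 1) * (lam%:R * expR eps + r%:R - lam%:R)) /
          ((r%:R - lam%:R) ^+ 2 * (expR eps - 1) ^+ 2 * v%:R) *
          (v%:R * (b%:R - r%:R) + (v%:R - 1) * (r%:R - lam%:R) * (expR eps - 1))
        + v%:R^-1 - \sum_x P x ^+ 2)) /\
  (* worst-case risk: sup over the simplex, attained at the uniform distribution *)
  (forall P : {ffun 'I_v -> R}, @in_simplex R v P ->
     @risk R v b n (@l22 R v) P Q est <= @worst_risk R v b r lam n eps) /\
  @in_simplex R v (uniformP R v) /\
  @risk R v b n (@l22 R v) (uniformP R v) Q est = @worst_risk R v b r lam n eps.
Proof.
move=> v_gt0 n_gt0 eps_gt0 design Q est.
have uniform_simplex := uniformP_in_simplex R v_gt0.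
split; first by move=> P P_simplex x; apply: Phat_unbiased.
split; first by move=> P; apply: risk_Phat.
split.
  move=> P P_simplex; rewrite risk_Phat // (worst_riskE design) //.
  rewrite ler_pM2l ?invr_gt0 ?ltr0n // -addrA gerDl subr_le0.
  have card_gt0 : (0 < #|'I_v|)%N by rewrite card_ord.
  by have := inv_card_le_sum_sqr card_gt0 P_simplex.2; rewrite card_ord.
split=> //.
by rewrite risk_Phat // (worst_riskE design) // sum_sqr_uniformP // addrK.
Qed.
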